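(* Let $\kappa$ be a field, $r\ge1$, $\mathbf{s}=(s_1,\dots,s_d)$ nonnegative integers with sum $r$, $w\in S_{r,\mathbf{s}}$ and $u\in U_w$. Let $H_{\mathbf{s}}:=P_{\mathbf{s}}\times T$ act on $\mathrm{GL}_r(\kappa)$ by $(p,t)\cdot g=pgt^{-1}$. Then the stabilizer of $wu$ in $H_{\mathbf{s}}$ is isomorphic to $$C_T(u)=\{t\in T: tut^{-1}=u\}=\bigcap_{\{\alpha\in R^+\,:\,w\cdot\alpha\in R^-\smallsetminus R_{\mathbf{s}},\ u_\alpha\neq1\}}\mathrm{Ker}\,\alpha.$$
   Context: $T\cong(\kappa^\times)^r$ is the diagonal torus of $\mathrm{GL}_r$. Partition $\{1,\dots,r\}$ into consecutive blocks of sizes $s_d,\dots,s_1$ from $1$ upward; $P_{\mathbf{s}}$ is the block lower triangular subgroup, $L_{\mathbf{s}}$ its block diagonal Levi factor. Permutations $w$ are identified with matrices $a(w)_{ij}=\delta_{i,w(j)}$; $S_{r,\mathbf{s}}$ is the set of $w$ with $w^{-1}(a)<w^{-1}(b)$ whenever $a<b$ are in the same block. Roots: $\alpha_{i,j}(t_1,\dots,t_r)=t_i/t_j$ for $i\ne j$; $R$ is the set of these, $R^+=\{\alpha_{i,j}:j<i\}$, $R^-=R\smallsetminus R^+$, $w\cdot\alpha_{i,j}=\alpha_{w(i),w(j)}$; $U_{\alpha_{i,j}}=\{I+xE_{i,j}:x\in\kappa\}$; $R_{\mathbf{s}}$ is the set of roots $\alpha$ with $U_\alpha\subset L_{\mathbf{s}}$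 (i.e. $\alpha_{i,j}$ with $i,j$ in the same block). $U_w$ is the group of lower unitriangular matrices whose off-diagonal entry $(i,j)$ vanishes unless $j<i$ and $w(i)<w(j)$. For $u\in U_w$ and $\alpha=\alpha_{i,j}$ with $U_\alpha\subset U_w$, $u_\alpha:=I+u_{ij}E_{i,j}$ is the component of $u$ in $U_\alpha$; so $u_\alpha\ne1$ means $u_{ij}\neq0$. *)

From HB Require Import structures.
From mathcomp Require Import all_boot all_order all_algebra all_fingroup.
Set Implicit Arguments. Unset Strict Implicit. Unset Printing Implicit Defensive.
Import Order.TTheory GRing.Theory Num.Theory.
Local Open Scope ring_scope.

(* Indices are 0-based: 'I_r = {0,..,r-1} stands for {1,..,r}. *)

(* s = [:: s_1; ...; s_d].  {0..r-1} is cut into consecutive blocks of sizes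
   s_d, ..., s_1 from the bottom (i.e. of sizes (rev s)).  blk s i is the label of
   the block containing i: the number of block-ends (prefix sums of rev s)
   that are <= i. *)
Definition blk (s : seq nat) (i : nat) : nat :=
  count (fun k => (sumn (take k.+1 (rev s)) <= i)%N) (iota 0 (size s)).

Section Defs.
Variables (K : fieldType) (r : nat).

Definition in_T (t : 'M[K]_r) : Prop :=
  (forall i j : 'I_r, i != j -> t i j = 0) /\ (forall i : 'I_r, t i i != 0).

Definition in_P (s : seq nat) (p : 'M[K]_r) : Prop :=
  p \in unitmx /\ (forall i j : 'I_r, (blk s i < blk s j)%N -> p i j = 0).

Definition in_S (s : seq nat) (w : 'S_r) : Prop :=
  forall a b : 'I_r, (a < b)%N -> blk s a = blk s b -> ((w^-1)%g a < (w^-1)%g b)%N.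

Definition in_U (w : 'S_r) (u : 'M[K]_r) : Prop :=
  (forall i : 'I_r, u i i = 1) /\
  (forall i j : 'I_r, ~~ ((j < i)%N && (w i < w j)%N) -> i != j -> u i j = 0).

Definition amat (w : 'S_r) : 'M[K]_r := \matrix_(i, j) ((i == w j)%:R).

Definition alpha (i j : 'I_r) (t : 'M[K]_r) : K := t i i / t j j.

Definition in_stab (s : seq nat) (g : 'M[K]_r) (x : 'M[K]_r * 'M[K]_r) : Prop :=
  in_P s x.1 /\ in_T x.2 /\ x.1 *m g *m invmx x.2 = g.

Definition in_CT (u : 'M[K]_r) (t : 'M[K]_r) : Prop :=
  in_T t /\ t *m u *m invmx t = u.

Definition grp_iso (A : 'M[K]_r * 'M[K]_r -> Prop) (B : 'M[K]_r -> Prop) : Prop :=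
  exists f : 'M[K]_r * 'M[K]_r -> 'M[K]_r,
    [/\ (forall x, A x -> B (f x)),
        (forall x y, A x -> A y -> f x = f y -> x = y),
        (forall t, B t -> exists2 x, A x & f x = t) &
        (forall x y, A x -> A y -> f (x.1 *m y.1, x.2 *m y.2) = f x *m f y)].
End Defs.

From HB Require Import structures.
From mathcomp Require Import all_boot all_order all_algebra all_fingroup.
Import Order.TTheory GRing.Theory Num.Theory.
Local Open Scope ring_scope.
Set Implicit Arguments. Unset Strict Implicit.

(* Write g = a(w) u.  A pair (p, t) stabilises g iff p g = g t, i.e.
   q u = u t for q := a(w)^-1 p a(w), q_ij = p_(w i, w j).  For an inversion
   (i, j) of w (j < i, w i < w j), w i lies in an earlier block than w j
   since w is in S_(r,s), so q vanishes wherever an off-diagonal entry of u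
   may be nonzero.  Reading q u = u t column by column from the right then
   forces q = t: p is determined by t, and t centralises u.  Conversely, for
   t in C_T(u) the pair (a(w) t a(w)^-1, t) stabilises g, so (p, t) |-> t is
   an isomorphism.  Entrywise, t u = u t says t_i u_ij = u_ij t_j, which only
   constrains the inversions (i, j) with u_ij <> 0, lying in distinct blocks. *)

Lemma blk_mono s : {homo blk s : i j / (i <= j)%N}.
Proof. by move=> i j hij; apply: sub_count => k /= hk; apply: leq_trans hij. Qed.

Section StabilizerOfWU.
Variables (K : fieldType) (r : nat).
Implicit Types (s : seq nat) (w : 'S_r) (p t u A : 'M[K]_r).

Lemma amat_mulE w A i j : (amat K w *m A) i j = A ((w^-1)%g i) j.
Proof.
rewrite mxE (bigD1 ((w^-1)%g i)) //= mxE permKV eqxx mul1r big1 ?addr0 // => k hk.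
rewrite mxE; case: eqP => [e|]; last by rewrite mul0r.
by move: hk; rewrite e permK eqxx.
Qed.

Lemma mul_amatE w A i j : (A *m amat K w) i j = A i (w j).
Proof.
rewrite mxE (bigD1 (w j)) //= mxE eqxx mulr1 big1 ?addr0 // => k hk.
by rewrite mxE (negbTE hk) mulr0.
Qed.

Lemma amat_unitmx w : amat K w \in unitmx.
Proof.
suff -> : amat K w = perm_mx (w^-1)%g by apply: unitmx_perm.
apply/matrixP => i j; rewrite !mxE; congr (_%:R).
by rewrite -(inj_eq (@perm_inj _ (w^-1)%g)) permK.
Qed.

Lemma conj_amatE w A k l :
  (amat K w *m A *m invmx (amat K w)) k l = A ((w^-1)%g k) ((w^-1)%g l).
Proof.
have := congr1 (fun M : 'M[K]_r => M k ((w^-1)%g l))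
  (mulmxKV (amat_unitmx w) (amat K w *m A)).
by rewrite /= mul_amatE permKV amat_mulE.
Qed.

Lemma lower_trig_unitmx A :
  (forall i j : 'I_r, (i < j)%N -> A i j = 0) -> (forall i, A i i != 0) ->
  A \in unitmx.
Proof.
move=> A_lower A_diag; rewrite unitmxE det_trig; last exact/is_trig_mxP.
by rewrite unitfE; apply/prodf_neq0.
Qed.

Section Torus.
Variable t : 'M[K]_r.
Hypothesis tT : in_T t.

Lemma in_T_unitmx : t \in unitmx.
Proof.
apply: lower_trig_unitmx; last exact: tT.2.
by move=> i j /ltn_eqF hij; apply: tT.1; rewrite -val_eqE /= hij.
Qed.

Lemma in_T_mulmxE A i j : (t *m A) i j = t i i * A i j.
Proof.
rewrite mxE (bigD1 i) //= big1 ?addr0 // => k hk.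
by rewrite tT.1 ?mul0r // eq_sym.
Qed.

Lemma mulmx_in_TE A i j : (A *m t) i j = A i j * t j j.
Proof. by rewrite mxE (bigD1 j) //= big1 ?addr0 // => k hk; rewrite tT.1 ?mulr0. Qed.

Lemma in_T_in_P s : in_P s t.
Proof.
split=> [|i j hij]; first exact: in_T_unitmx.
by apply: tT.1; apply: contraTneq hij => ->; rewrite ltnn.
Qed.

Lemma in_T_conj_amat w : in_T (amat K w *m t *m invmx (amat K w)).
Proof.
split=> [k l hkl|k]; rewrite conj_amatE; last exact: tT.2.
by apply: tT.1; rewrite (inj_eq (@perm_inj _ _)).
Qed.

Lemma in_CT_entrywise u :
  in_CT u t <-> forall i j, t i i * u i j = u i j * t j j.
Proof.
have tu := in_T_unitmx.
have comm : in_CT u t <-> t *m u = u *m t.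
  split=> [[_ e]|e]; first by rewrite -{2}e mulmxKV.
  by split=> //; rewrite e mulmxK.
apply: iff_trans comm _; split=> [e i j|e].
  by rewrite -in_T_mulmxE e mulmx_in_TE.
by apply/matrixP => i j; rewrite in_T_mulmxE mulmx_in_TE.
Qed.

End Torus.

Section UnipotentW.
Variables (w : 'S_r) (u : 'M[K]_r).
Hypothesis uU : in_U w u.

Lemma in_U_support (i j : 'I_r) : u i j != 0 -> i != j -> (j < i)%N && (w i < w j)%N.
Proof. by move=> uij ij; apply: contraNT uij => /uU.2 ->. Qed.

Lemma in_U_lower (i j : 'I_r) : (i < j)%N -> u i j = 0.
Proof.
move=> ij; apply: uU.2; first by rewrite ltnNge (ltnW ij).
by rewrite -val_eqE /= ltn_eqF.
Qed.

Lemma in_U_unitmx : u \in unitmx.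
Proof. by apply: lower_trig_unitmx in_U_lower _ => i; rewrite uU.1 oner_neq0. Qed.

Variables (Q : 'I_r -> 'I_r -> K) (d : 'I_r -> K).

Lemma in_U_col_sum (i j : 'I_r) :
  (forall k : 'I_r, (j < k)%N -> forall i, Q i k = (i == k)%:R * d k) ->
  \sum_k Q i k * u k j = Q i j + (if (j < i)%N then d i * u i j else 0).
Proof.
move=> Q_right; set c := (if _ then _ else _).
have c_ji : i = j -> c = 0 by move=> ij; rewrite /c ij ltnn.
transitivity (\sum_k ((if k == j then Q i j else 0) + (if k == i then c else 0))).
  apply: eq_bigr => k _; case: (ltngtP k j) => kj.
  - rewrite in_U_lower // mulr0 -val_eqE /= ltn_eqF // add0r.
    by case: eqP => // ki; rewrite /c -ki ltnNge (ltnW kj).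
  - rewrite Q_right // [k == j](_ : _ = false) ?add0r; last first.
      by rewrite -val_eqE /= gtn_eqF.
    by rewrite eq_sym; case: eqP => [ki|_]; rewrite ?mul0r // /c -ki kj mul1r.
  - have -> : k = j by apply: val_inj.
    by rewrite uU.1 mulr1 eqxx; case: eqP => [ji|_]; rewrite ?c_ji // addr0.
by rewrite big_split /= -!big_mkcond !big_pred1_eq.
Qed.

(* Column j of q u = u t only involves the columns k >= j of q, so descend on j. *)
Lemma in_U_intertwine_diag :
  (forall i j : 'I_r, (j < i)%N -> (w i < w j)%N -> Q i j = 0) ->
  (forall i j, \sum_k Q i k * u k j = u i j * d j) ->
  forall i j, Q i j = (i == j)%:R * d j.
Proof.
move=> Q_inv Q_u i j; have [n] := ubnP (r - j); elim: n => // n IH in i j *.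
rewrite ltnS => jn; have := Q_u i j; rewrite in_U_col_sum; last first.
  move=> k jk i'; apply: IH; apply: leq_trans jn.
  by rewrite ltn_sub2l ?(leq_trans jk) // ltnW.
case: (eqVneq i j) => [->|ij]; first by rewrite uU.1 ltnn addr0 mul1r.
rewrite mul0r; case: (boolP ((j < i)%N && (w i < w j)%N)) => [/andP[]|inv].
  by move=> ji wij _; apply: Q_inv.
by rewrite uU.2 // mulr0 if_same mul0r addr0.
Qed.

End UnipotentW.

Lemma in_S_blk_neq s w (i j : 'I_r) : in_S s w -> (j < i)%N -> (w i < w j)%N ->
  blk s (w i) != blk s (w j).
Proof.
move=> wS ji wij; apply/eqP => e; have := wS _ _ wij e.
by rewrite !permK ltnNge (ltnW ji).
Qed.

Lemma in_P_inversion s w p (i j : 'I_r) : in_S s w -> in_P s p ->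
  (j < i)%N -> (w i < w j)%N -> p (w i) (w j) = 0.
Proof.
move=> wS pP ji wij; apply: pP.2.
by rewrite ltn_neqAle in_S_blk_neq // blk_mono // ltnW.
Qed.

Section Stabilizer.
Variables (s : seq nat) (w : 'S_r) (u : 'M[K]_r).
Hypotheses (wS : in_S s w) (uU : in_U w u).
Let g := amat K w *m u.

Lemma stab_eq p t : in_T t -> p *m g *m invmx t = g -> p *m g = g *m t.
Proof. by move=> tT e; rewrite -{2}e mulmxKV // in_T_unitmx. Qed.

Lemma in_stab_in_CT p t : in_stab s g (p, t) -> in_CT u t.
Proof.
case=> /= pP [tT /(stab_eq tT) e].
have p_u i j : \sum_k p (w i) (w k) * u k j = u i j * t j j.
  have := congr1 (fun M : 'M[K]_r => M (w i) j) e.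
  rewrite /= (mulmx_in_TE tT) /g amat_mulE permK mxE => <-.
  symmetry; rewrite (reindex_inj (@perm_inj _ w)); apply: eq_bigr => k _.
  by rewrite amat_mulE permK.
have q_diag := @in_U_intertwine_diag _ _ uU (fun i j => p (w i) (w j)) _
  (fun i j => in_P_inversion wS pP) p_u.
apply/(in_CT_entrywise tT) => i j; rewrite -p_u (bigD1 i) //= q_diag eqxx mul1r.
by rewrite big1 ?addr0 // => k ki; rewrite q_diag eq_sym (negbTE ki) !mul0r.
Qed.

Lemma in_stab_inj x y : in_stab s g x -> in_stab s g y -> x.2 = y.2 -> x = y.
Proof.
case: x y => [p1 t1] [p2 t2] [_ [tT e1]] [_ [_ e2]] /= et; subst t2.
have gu : g \in unitmx by rewrite unitmx_mul amat_unitmx (in_U_unitmx uU).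
by rewrite -(mulmxK gu p1) (stab_eq tT e1) -(stab_eq tT e2) mulmxK.
Qed.

Lemma in_CT_in_stab t :
  in_CT u t -> in_stab s g (amat K w *m t *m invmx (amat K w), t).
Proof.
case=> tT tu; split; first exact/in_T_in_P/in_T_conj_amat.
split=> //=; rewrite mulmxA mulmxKV ?amat_unitmx //.
by rewrite -[amat K w *m t *m u]mulmxA -mulmxA tu.
Qed.

Lemma in_CT_rootsP t :
  in_CT u t <->
  in_T t /\
  forall i j : 'I_r,
    (j < i)%N -> (w i < w j)%N -> blk s (w i) != blk s (w j) -> u i j != 0 ->
    alpha i j t = 1.
Proof.
split=> [tC|[tT roots]].
  have tT := tC.1; split=> // i j _ _ _ uij.
  move/(in_CT_entrywise tT)/(_ i j): tC; rewrite mulrC => /(mulfI uij) tij.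
  by rewrite /alpha tij divff // tT.2.
apply/(in_CT_entrywise tT) => i j.
case: (eqVneq (u i j) 0) => [->|uij]; first by rewrite mulr0 mul0r.
case: (eqVneq i j) => [->|ij]; first by rewrite mulrC.
have /andP[ji wij] := in_U_support uU uij ij.
have := roots i j ji wij (in_S_blk_neq wS ji wij) uij.
by rewrite /alpha => tij; rewrite -[t i i](divfK (tT.2 j)) tij mul1r mulrC.
Qed.

End Stabilizer.
End StabilizerOfWU.

Theorem lemma3p4 (K : fieldType) (r : nat) (s : seq nat) (w : 'S_r)
    (u : 'M[K]_r) :
  (0 < r)%N -> sumn s = r -> in_S s w -> in_U w u ->
  grp_iso (in_stab s (amat K w *m u)) (in_CT u) /\
  (forall t : 'M[K]_r,
     in_CT u t <->
     (in_T t /\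
      forall i j : 'I_r,
        (j < i)%N -> (w i < w j)%N -> blk s (w i) != blk s (w j) -> u i j != 0 ->
        alpha i j t = 1)).
Proof.
move=> _ _ wS uU; split; last exact: in_CT_rootsP.
exists snd; split.
- by move=> [p t]; apply: in_stab_in_CT.
- exact: in_stab_inj.
- by move=> t tC; exists (amat K w *m t *m invmx (amat K w), t); first exact: in_CT_in_stab.
- by [].
Qed.
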